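(* There is a unique mass distribution $(m_1',m_2',m_3')$ (positive, with $m_1'+m_2'+m_3'=1$) such that $m_1'\hat{\mathbf b}_1+m_2'\hat{\mathbf b}_2+m_3'\hat{\mathbf b}_3=0$, namely the dual masses $m_i'=\frac12(1-m_i)$.
   Context: Masses $m_1,m_2,m_3>0$, $m_1+m_2+m_3=1$. The shape sphere (oriented m-triangles $(\mathbf a_i)$, $\sum m_i\mathbf a_i=0$, with $\sum m_i|\mathbf a_i|^2=1$, modulo rotation, with the kinematic metric, a round sphere of radius $1/2$) is magnified by factor $2$ and identified isometrically with the unit sphere $S^2(1)\subset\mathbb R^3$ so that the equator of collinear shapes is the circle $x^2+y^2=1$, $z=0$ and positively oriented shapes have $z>0$. $\hat{\mathbf b}_1,\hat{\mathbf b}_2,\hat{\mathbf b}_3$ are the unit vectors representing the binary collision shapes $\mathbf a_2=\mathbf a_3$, $\mathbf a_3=\mathbf a_1$, $\mathbf a_1=\mathbf a_2$ respectively. *)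

From HB Require Import structures.
From mathcomp Require Import all_boot all_order all_algebra.
Set Implicit Arguments. Unset Strict Implicit. Unset Printing Implicit Defensive.
Import Order.TTheory GRing.Theory Num.Theory.
Local Open Scope ring_scope.

Definition pt (R : Type) := (R * R)%type.
Definition cfg (R : Type) := (pt R * pt R * pt R)%type.
Definition cA1 {R} (c : cfg R) : pt R := c.1.1.
Definition cA2 {R} (c : cfg R) : pt R := c.1.2.
Definition cA3 {R} (c : cfg R) : pt R := c.2.

Section Shape.
Variable R : rcfType.
Variables m1 m2 m3 : R.

Definition padd (p q : pt R) : pt R := (p.1 + q.1, p.2 + q.2).
Definition pscale (k : R) (p : pt R) : pt R := (k * p.1, k * p.2).
Definition psub (p q : pt R) : pt R := (p.1 - q.1, p.2 - q.2).
Definition pdot (p q : pt R) : R := p.1 * q.1 + p.2 * q.2.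
Definition pcross (p q : pt R) : R := p.1 * q.2 - p.2 * q.1.

Definition centered (c : cfg R) : Prop :=
  padd (padd (pscale m1 (cA1 c)) (pscale m2 (cA2 c))) (pscale m3 (cA3 c)) = (0, 0).

Definition normalized (c : cfg R) : Prop :=
  m1 * pdot (cA1 c) (cA1 c) + m2 * pdot (cA2 c) (cA2 c)
  + m3 * pdot (cA3 c) (cA3 c) = 1.

Definition shape_config (c : cfg R) : Prop := centered c /\ normalized c.

(* mass-weighted Jacobi coordinates; the map c |-> (xi1, xi2) is an isometry
   for the kinematic metric onto R^4 = C^2 *)
Definition jacobi1 (c : cfg R) : pt R :=
  pscale (Num.sqrt (m2 * m3 / (m2 + m3))) (psub (cA3 c) (cA2 c)).
Definition jacobi2 (c : cfg R) : pt R :=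
  pscale (Num.sqrt (m1 * (m2 + m3)))
    (psub (cA1 c) (pscale (m2 + m3)^-1
                     (padd (pscale m2 (cA2 c)) (pscale m3 (cA3 c))))).

(* Hopf map (xi1, xi2) |-> (|xi1|^2 - |xi2|^2, 2 Re(xi1 conj xi2),
   2 Im(conj xi1 xi2)): it is invariant under rotations of the triangle and
   identifies the shape sphere (radius 1/2, kinematic metric), magnified by 2,
   isometrically with the unit sphere S^2(1); collinear shapes go to z = 0 and
   positively oriented (counterclockwise) triangles to z > 0. *)
Definition shape_point (c : cfg R) : 'rV[R]_3 :=
  let u := jacobi1 c in let v := jacobi2 c in
  \row_(i < 3) [:: pdot u u - pdot v v; 2 * pdot u v; 2 * pcross u v]`_i.

End Shape.

Definition e3 {R : nzRingType} : 'rV[R]_3 := \row_(i < 3) (i == 2%N :> nat)%:R.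

(* Q (acting on row vectors v |-> v *m Q) is an isometry of R^3 *)
Definition orthogonal_mx {R : nzRingType} (Q : 'M[R]_3) : Prop := Q *m Q^T = 1%:M.

From HB Require Import structures.
From mathcomp Require Import all_boot all_order all_algebra.
From mathcomp Require Import ring lra.
Import Order.TTheory GRing.Theory Num.Theory.
Set Implicit Arguments. Unset Strict Implicit. Unset Printing Implicit Defensive.
Local Open Scope ring_scope.

(* At a binary collision the triangle is collinear, so both Jacobi vectors are
   multiples of the vector d joining the colliding pair to the third body, and
   the shape lies on the equator.  Lagrange's identity (inertia = sum of
   m_i m_j |a_i - a_j|^2 for a centred triangle of total mass 1) gives
   |d|^2 = 1/(m_k (1 - m_k)), which makes the three collision shapes explicit:
   b_1 = (-1, 0, 0), and b_2, b_3 with second coordinates of opposite signs.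
   The linear relations among them form the line spanned by
   (1 - m_1, 1 - m_2, 1 - m_3), and the normalisation n_1 + n_2 + n_3 = 1
   selects the point with factor 1/2.  Only the invertibility of Q matters. *)

Lemma mulmx_orthogonal_eq0 (R : nzRingType) (Q : 'M[R]_3) (v : 'rV[R]_3) :
  orthogonal_mx Q -> v *m Q = 0 -> v = 0.
Proof. by move=> QQt vQ0; rewrite -[v]mulmx1 -QQt mulmxA vQ0 mul0mx. Qed.

Definition vec3 {R : nzRingType} (x y z : R) : 'rV[R]_3 :=
  \row_(i < 3) [:: x; y; z]`_i.

Section Vec3.
Variable R : nzRingType.
Implicit Types k x y z : R.

Lemma scale_vec3 k x y z : k *: vec3 x y z = vec3 (k * x) (k * y) (k * z).
Proof. by apply/rowP => i; rewrite !mxE; case: i => -[|[|[|]]] //= _; rewrite mulr0. Qed.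

Lemma add_vec3 x y z x' y' z' :
  vec3 x y z + vec3 x' y' z' = vec3 (x + x') (y + y') (z + z').
Proof. by apply/rowP => i; rewrite !mxE; case: i => -[|[|[|]]] //= _; rewrite addr0. Qed.

Lemma vec3_eq0 x y z : vec3 x y z = 0 <-> [/\ x = 0, y = 0 & z = 0].
Proof.
split=> [/rowP e | [-> -> ->]].
  by split; [move: (e 0) | move: (e 1) | move: (e 2)]; rewrite !mxE.
by apply/rowP => i; rewrite !mxE; case: i => -[|[|[|]]].
Qed.

End Vec3.

Section PlaneAlgebra.
Variable R : rcfType.
Implicit Types (k l : R) (p q : pt R).

Lemma pdotZ k l p q : pdot (pscale k p) (pscale l q) = k * l * pdot p q.
Proof. rewrite /pdot /=; ring. Qed.

Lemma pcrossZ k l p q : pcross (pscale k p) (pscale l q) = k * l * pcross p q.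
Proof. rewrite /pcross /=; ring. Qed.

Lemma pcrosspp p : pcross p p = 0.
Proof. by rewrite /pcross mulrC subrr. Qed.

Lemma lagrange_inertia (m1 m2 m3 : R) (a1 a2 a3 : pt R) :
  let G := padd (padd (pscale m1 a1) (pscale m2 a2)) (pscale m3 a3) in
  (m1 + m2 + m3) * (m1 * pdot a1 a1 + m2 * pdot a2 a2 + m3 * pdot a3 a3) =
  m1 * m2 * pdot (psub a1 a2) (psub a1 a2) + m2 * m3 * pdot (psub a2 a3) (psub a2 a3)
  + m3 * m1 * pdot (psub a3 a1) (psub a3 a1) + pdot G G.
Proof. rewrite /pdot /psub /padd /pscale /=; ring. Qed.

End PlaneAlgebra.

Section BinaryCollisions.
Variables (R : rcfType) (m1 m2 m3 : R).
Hypotheses (m1_gt0 : 0 < m1) (m2_gt0 : 0 < m2) (m3_gt0 : 0 < m3).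
Hypothesis mass1 : m1 + m2 + m3 = 1.

Definition rel_jacobi1 (c : cfg R) : pt R := psub (cA3 c) (cA2 c).
Definition rel_jacobi2 (c : cfg R) : pt R :=
  psub (cA1 c) (pscale (m2 + m3)^-1 (padd (pscale m2 (cA2 c)) (pscale m3 (cA3 c)))).

Let K := Num.sqrt (m1 * m2 * m3).

Lemma shape_pointE c :
  shape_point m1 m2 m3 c =
  vec3 (m2 * m3 / (m2 + m3) * pdot (rel_jacobi1 c) (rel_jacobi1 c)
        - m1 * (m2 + m3) * pdot (rel_jacobi2 c) (rel_jacobi2 c))
       (2 * K * pdot (rel_jacobi1 c) (rel_jacobi2 c))
       (2 * K * pcross (rel_jacobi1 c) (rel_jacobi2 c)).
Proof.
have m23_gt0 : 0 < m2 + m3 by rewrite addr_gt0.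
have w1_ge0 : 0 <= m2 * m3 / (m2 + m3) by rewrite ltW // divr_gt0 // mulr_gt0.
have w2_ge0 : 0 <= m1 * (m2 + m3) by rewrite ltW // mulr_gt0.
have sqrt_prod : Num.sqrt (m2 * m3 / (m2 + m3)) * Num.sqrt (m1 * (m2 + m3)) = K.
  by rewrite -sqrtrM //; congr Num.sqrt; field; rewrite gt_eqF.
rewrite /shape_point /jacobi1 /jacobi2 !pdotZ pcrossZ -!expr2 !sqr_sqrtr //.
by rewrite !mulrA -!(mulrA 2) sqrt_prod.
Qed.

Lemma inertia_pairwise c : shape_config m1 m2 m3 c ->
  m1 * m2 * pdot (psub (cA1 c) (cA2 c)) (psub (cA1 c) (cA2 c))
  + m2 * m3 * pdot (psub (cA2 c) (cA3 c)) (psub (cA2 c) (cA3 c))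
  + m3 * m1 * pdot (psub (cA3 c) (cA1 c)) (psub (cA3 c) (cA1 c)) = 1.
Proof.
move=> [centered_c normalized_c].
have := @lagrange_inertia R m1 m2 m3 (cA1 c) (cA2 c) (cA3 c).
have pdot00 : pdot (0, 0) (0, 0) = 0 :> R by rewrite /pdot mul0r addr0.
by rewrite /= mass1 mul1r normalized_c centered_c pdot00 addr0 => <-.
Qed.

Lemma shape_point_collinear c (k l : R) (d : pt R) :
  rel_jacobi1 c = pscale k d -> rel_jacobi2 c = pscale l d ->
  shape_point m1 m2 m3 c =
  vec3 ((m2 * m3 / (m2 + m3) * k ^+ 2 - m1 * (m2 + m3) * l ^+ 2) * pdot d d)
       (2 * K * (k * l) * pdot d d) 0.
Proof.
move=> r1 r2; rewrite shape_pointE r1 r2 !pdotZ pcrossZ pcrosspp.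
by congr vec3; ring.
Qed.

Definition collision_shape1 : 'rV[R]_3 := vec3 (-1) 0 0.
Definition collision_shape2 : 'rV[R]_3 :=
  vec3 ((m3 - m1 * m2) / ((1 - m1) * (1 - m2)))
       (2 * K / ((1 - m1) * (1 - m2))) 0.
Definition collision_shape3 : 'rV[R]_3 :=
  vec3 ((m2 - m1 * m3) / ((1 - m1) * (1 - m3)))
       (- (2 * K) / ((1 - m1) * (1 - m3))) 0.

Let m23E : m2 + m3 = 1 - m1. Proof. by rewrite -mass1; ring. Qed.
Let m13E : m1 + m3 = 1 - m2. Proof. by rewrite -mass1; ring. Qed.
Let m12E : m1 + m2 = 1 - m3. Proof. by rewrite -mass1; ring. Qed.
Let dual1_gt0 : 0 < 1 - m1. Proof. by rewrite -m23E addr_gt0. Qed.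
Let dual2_gt0 : 0 < 1 - m2. Proof. by rewrite -m13E addr_gt0. Qed.
Let dual3_gt0 : 0 < 1 - m3. Proof. by rewrite -m12E addr_gt0. Qed.
Let K_gt0 : 0 < K. Proof. by rewrite sqrtr_gt0 !mulr_gt0. Qed.
Let neq0E := (gt_eqF m1_gt0, gt_eqF m2_gt0, gt_eqF m3_gt0, gt_eqF K_gt0,
  gt_eqF dual1_gt0, gt_eqF dual2_gt0, gt_eqF dual3_gt0, m23E, m13E, m12E).

Lemma shape_point_collision23 c :
  shape_config m1 m2 m3 c -> cA2 c = cA3 c ->
  shape_point m1 m2 m3 c = collision_shape1.
Proof.
move=> /inertia_pairwise inertia a23; set d := psub (cA1 c) (cA2 c).
have d_norm : pdot d d = (m1 * (1 - m1))^-1.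
  rewrite -m23E -[RHS]mulr1 -inertia -a23 /d /pdot /psub /=.
  by field; rewrite !neq0E.
rewrite (@shape_point_collinear c 0 1 d) ?d_norm /collision_shape1.
- by congr vec3; rewrite ?m23E; field; rewrite !neq0E.
- by rewrite /rel_jacobi1 -a23 /psub /pscale /=; congr pair; ring.
- by rewrite /rel_jacobi2 -a23 /d /psub /pscale /padd /=; congr pair; field; rewrite !neq0E.
Qed.

Lemma shape_point_collision31 c :
  shape_config m1 m2 m3 c -> cA3 c = cA1 c ->
  shape_point m1 m2 m3 c = collision_shape2.
Proof.
move=> /inertia_pairwise inertia a31; set d := psub (cA1 c) (cA2 c).
have d_norm : pdot d d = (m2 * (1 - m2))^-1.
  rewrite -m13E -[RHS]mulr1 -inertia a31 /d /pdot /psub /=.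
  by field; rewrite !neq0E.
rewrite (@shape_point_collinear c 1 (m2 / (m2 + m3)) d) ?d_norm /collision_shape2.
- by congr vec3; rewrite ?m23E; field; rewrite !neq0E.
- by rewrite /rel_jacobi1 a31 /d /psub /pscale /=; congr pair; ring.
- by rewrite /rel_jacobi2 a31 /d /psub /pscale /padd /=; congr pair; field; rewrite !neq0E.
Qed.

Lemma shape_point_collision12 c :
  shape_config m1 m2 m3 c -> cA1 c = cA2 c ->
  shape_point m1 m2 m3 c = collision_shape3.
Proof.
move=> /inertia_pairwise inertia a12; set d := psub (cA3 c) (cA1 c).
have d_norm : pdot d d = (m3 * (1 - m3))^-1.
  rewrite -m12E -[RHS]mulr1 -inertia -a12 /d /pdot /psub /=.
  by field; rewrite !neq0E.
rewrite (@shape_point_collinear c 1 (- m3 / (m2 + m3)) d) ?d_norm /collision_shape3.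
- by congr vec3; rewrite ?m23E; field; rewrite !neq0E.
- by rewrite /rel_jacobi1 -a12 /d /psub /pscale /=; congr pair; ring.
- by rewrite /rel_jacobi2 -a12 /d /psub /pscale /padd /=; congr pair; field; rewrite !neq0E.
Qed.

Lemma collision_shapes_relation n1 n2 n3 :
  n1 *: collision_shape1 + n2 *: collision_shape2 + n3 *: collision_shape3 = 0 <->
  exists l, [/\ n1 = l * (1 - m1), n2 = l * (1 - m2) & n3 = l * (1 - m3)].
Proof.
rewrite !scale_vec3 !add_vec3 vec3_eq0.
set X2 := (m3 - _) / _; set Y2 := 2 * K / _.
set X3 := (m2 - _) / _; set Y3 := - _ / _.
have X_dual : (1 - m2) * X2 + (1 - m3) * X3 = 1 - m1.
  by rewrite /X2 /X3 -[in RHS]m23E; field; rewrite !neq0E.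
have Y2E : Y2 = - ((1 - m3) * Y3) / (1 - m2).
  by rewrite /Y2 /Y3; field; rewrite !neq0E.
have Y3_neq0 : Y3 != 0.
  by rewrite /Y3 mulf_neq0 ?oppr_eq0 ?invr_eq0 ?mulf_neq0 ?pnatr_eq0 ?neq0E.
split=> [[ex ey _] | [l [-> -> ->]]].
  have n3E : n3 = n2 / (1 - m2) * (1 - m3).
    have : (n3 - n2 / (1 - m2) * (1 - m3)) * Y3 = 0.
      by rewrite -[RHS]ey Y2E; field; rewrite !neq0E.
    by move/eqP; rewrite mulf_eq0 (negbTE Y3_neq0) orbF subr_eq0 => /eqP.
  exists (n2 / (1 - m2)); split=> //; last by rewrite divfK ?neq0E.
  have -> : n1 = n2 * X2 + n3 * X3 by rewrite -[LHS]addr0 -ex; ring.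
  by rewrite n3E -X_dual; field; rewrite !neq0E.
split; last by rewrite !mulr0 !addr0.
- transitivity (l * ((1 - m2) * X2 + (1 - m3) * X3 - (1 - m1))); first by ring.
  by rewrite X_dual subrr mulr0.
- by rewrite Y2E; field; rewrite !neq0E.
Qed.

End BinaryCollisions.

Theorem mainTheorem17 (R : rcfType) (m1 m2 m3 : R)
  (hm1 : 0 < m1) (hm2 : 0 < m2) (hm3 : 0 < m3) (hm : m1 + m2 + m3 = 1)
  (c1 c2 c3 : cfg R) (Q : 'M[R]_3) :
  (* c1, c2, c3 are normalised m-triangles with binary collisions
     a2 = a3, a3 = a1, a1 = a2 respectively *)
  shape_config m1 m2 m3 c1 -> cA2 c1 = cA3 c1 ->
  shape_config m1 m2 m3 c2 -> cA3 c2 = cA1 c2 ->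
  shape_config m1 m2 m3 c3 -> cA1 c3 = cA2 c3 ->
  (* any isometric identification with S^2(1) keeping the equator and
     sending positively oriented shapes to z > 0 *)
  orthogonal_mx Q -> e3 *m Q = e3 ->
  let b1 := shape_point m1 m2 m3 c1 *m Q in
  let b2 := shape_point m1 m2 m3 c2 *m Q in
  let b3 := shape_point m1 m2 m3 c3 *m Q in
  let good (n1 n2 n3 : R) :=
    [/\ 0 < n1, 0 < n2, 0 < n3, n1 + n2 + n3 = 1
      & n1 *: b1 + n2 *: b2 + n3 *: b3 = 0] in
  good ((1 - m1) / 2) ((1 - m2) / 2) ((1 - m3) / 2) /\
  (forall n1 n2 n3 : R, good n1 n2 n3 ->
     [/\ n1 = (1 - m1) / 2, n2 = (1 - m2) / 2 & n3 = (1 - m3) / 2]).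
Proof.
move=> col1 e1 col2 e2 col3 e3' orthoQ _ b1 b2 b3 good.
have relationE n1 n2 n3 : n1 *: b1 + n2 *: b2 + n3 *: b3 = 0 <->
    exists l, [/\ n1 = l * (1 - m1), n2 = l * (1 - m2) & n3 = l * (1 - m3)].
  rewrite -(collision_shapes_relation hm1 hm2 hm3 hm) /b1 /b2 /b3.
  rewrite (shape_point_collision23 hm1 hm2 hm3 hm col1 e1).
  rewrite (shape_point_collision31 hm1 hm2 hm3 hm col2 e2).
  rewrite (shape_point_collision12 hm1 hm2 hm3 hm col3 e3').
  rewrite !scalemxAl -!mulmxDl.
  by split=> [/(mulmx_orthogonal_eq0 orthoQ) | ->]; rewrite ?mul0mx.
split.
  split; [| | | by lra | by apply/relationE; exists 2^-1; split; rewrite mulrC];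
    by rewrite divr_gt0 //; lra.
move=> n1 n2 n3 [_ _ _ sum_n /relationE [l [n1E n2E n3E]]].
have l2 : l * 2 = 1.
  rewrite -[RHS]sum_n n1E n2E n3E.
  by transitivity (l * (3 - (m1 + m2 + m3))); [rewrite hm | ]; ring.
have two_neq0 : 2 != 0 :> R by rewrite pnatr_eq0.
have l_half : l = 2^-1 by apply: (mulIf two_neq0); rewrite l2 mulVf.
by rewrite n1E n2E n3E l_half; split; rewrite mulrC.
Qed.
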